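(* Let $n=5$, $I_1=\{1,2,3,4\}$, $I_2=\{1,2,3,5\}$, and $f=f_1+f_2$ with $$f_1=x_4^2(x_1^4x_2^2+x_2^4x_3^2+x_1^2x_3^4-3x_1^2x_2^2x_3^2)+x_3^8,\qquad f_2=x_1^2x_2^2x_3^2x_5^2.$$ Let $H_1:=(x_1^2+x_2^2+x_3^2+x_4^2)(x_1^2+x_2^2+x_3^2)$ and $H_2:=(x_1^2+x_2^2+x_3^2+x_5^2)(x_1^2+x_2^2+x_3^2)$. Then: (1) $f$ is a nonnegative form of degree $8$ which is not positive definite; (2) there are no $\sigma_1\in\Sigma[x(I_1)]$, $\sigma_2\in\Sigma[x(I_2)]$ with $f=\sigma_1+\sigma_2$; but there exist $\sigma_1\in\Sigma[x(I_1)]_6$, $\sigma_2\in\Sigma[x(I_2)]_6$ with $f=\sigma_1/H_1+\sigma_2/H_2$.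
   Context: For $T\subseteq\{1,\dots,n\}$, $x(T)=(x_i)_{i\in T}$; $\Sigma[x(T)]$ is the set of sums of squares of polynomials in the variables $x(T)$, and $\Sigma[x(T)]_t$ those sums of squares of polynomials of degree at most $t$. A form is positive definite if it is positive at every nonzero point. *)

(* real polynomials in variables x_1..x_5, represented as
   polynomial functions on points x : nat -> R (only x 1, ..., x 5 matter). *)
From Stdlib Require Import Reals List.
Import ListNotations.
Open Scope R_scope.

Definition point := nat -> R.

(* monomial prod_{i in T} x_i^(a i); exponents outside T are ignored,
   so the monomial only involves the variables x(T). *)
Definition monom (T : list nat) (a : nat -> nat) (x : point) : R :=
  fold_right (fun i acc => x i ^ a i * acc) 1 T.

Definition mdeg (T : list nat) (a : nat -> nat) : nat :=
  fold_right (fun i acc => (a i + acc)%nat) 0%nat T.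

Definition peval (T : list nat) (p : list (R * (nat -> nat))) (x : point) : R :=
  fold_right (fun c acc => fst c * monom T (snd c) x + acc) 0 p.

Definition is_poly_deg (T : list nat) (t : nat) (g : point -> R) : Prop :=
  exists p : list (R * (nat -> nat)),
    Forall (fun c => (mdeg T (snd c) <= t)%nat) p /\
    forall x, g x = peval T p x.

Definition SOS_deg (T : list nat) (t : nat) (s : point -> R) : Prop :=
  exists gs : list (point -> R),
    Forall (is_poly_deg T t) gs /\
    forall x, s x = fold_right (fun g acc => g x ^ 2 + acc) 0 gs.

Definition SOS (T : list nat) (s : point -> R) : Prop := exists t, SOS_deg T t s.

Definition I1 : list nat := [1; 2; 3; 4]%nat.
Definition I2 : list nat := [1; 2; 3; 5]%nat.

Definition f1 (x : point) : R :=
  x 4%nat ^ 2 * (x 1%nat ^ 4 * x 2%nat ^ 2 + x 2%nat ^ 4 * x 3%nat ^ 2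
                 + x 1%nat ^ 2 * x 3%nat ^ 4
                 - 3 * x 1%nat ^ 2 * x 2%nat ^ 2 * x 3%nat ^ 2)
  + x 3%nat ^ 8.

Definition f2 (x : point) : R :=
  x 1%nat ^ 2 * x 2%nat ^ 2 * x 3%nat ^ 2 * x 5%nat ^ 2.

Definition fpoly (x : point) : R := f1 x + f2 x.

Definition H1 (x : point) : R :=
  (x 1%nat ^ 2 + x 2%nat ^ 2 + x 3%nat ^ 2 + x 4%nat ^ 2)
  * (x 1%nat ^ 2 + x 2%nat ^ 2 + x 3%nat ^ 2).

Definition H2 (x : point) : R :=
  (x 1%nat ^ 2 + x 2%nat ^ 2 + x 3%nat ^ 2 + x 5%nat ^ 2)
  * (x 1%nat ^ 2 + x 2%nat ^ 2 + x 3%nat ^ 2).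

Definition nonzero5 (x : point) : Prop :=
  exists i, (1 <= i <= 5)%nat /\ x i <> 0.

Definition pos_def (g : point -> R) : Prop :=
  forall x, nonzero5 x -> 0 < g x.

(* Writing S for the Choi-Lam form x^4 y^2 + y^4 z^2 + z^4 x^2 - 3 x^2 y^2 z^2 in (x1, x2, x3),
   f = x4^2 S + x3^8 + (x1 x2 x3 x5)^2, and (x1^2 + x2^2 + x3^2) S is a sum of squares. This
   gives f >= 0, and exhibits f1 H1 and f2 H2 as sums of products of sums of squares.

   If f = s1 + s2 with s1 in Sigma[x(I1)] and s2 in Sigma[x(I2)], then on x5 = 0 the term s2
   does not involve x4, so s1 = x4^2 S + (terms free of x4). Comparing growth in x4, every
   polynomial squared in s1 is affine in x4, and the squares of the slopes sum to S. But S is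
   not a sum of squares: a function B with B^2 <= S that is polynomial along lines is a cubic
   form of degree at most 2 in each variable, vanishes at the zeros of S in {-1,0,1}^3 and is
   odd; these constraints force B = 0, whereas S(1,1,0) = 1. *)

From Stdlib Require Import Reals List Arith Lra Lia Psatz.
Import ListNotations.
Open Scope R_scope.

(** * Polynomial functions of one variable *)

Fixpoint horner (l : list R) (t : R) : R :=
  match l with [] => 0 | c :: l' => c + t * horner l' t end.

Definition poly_fun (q : R -> R) : Prop := exists l, forall t, q t = horner l t.

Fixpoint ladd (l m : list R) : list R :=
  match l, m with
  | [], _ => m
  | _, [] => l
  | a :: l', b :: m' => (a + b) :: ladd l' m'
  end.

Fixpoint lmul (l m : list R) : list R :=
  match l with [] => [] | a :: l' => ladd (map (Rmult a) m) (0 :: lmul l' m) end.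

Lemma horner_ladd l m t : horner (ladd l m) t = horner l t + horner m t.
Proof.
  revert m; induction l as [|a l IH]; intros [|b m]; simpl; try ring.
  rewrite IH; ring.
Qed.

Lemma horner_map_mul a l t : horner (map (Rmult a) l) t = a * horner l t.
Proof. induction l as [|b l IH]; simpl; [|rewrite IH]; ring. Qed.

Lemma horner_lmul l m t : horner (lmul l m) t = horner l t * horner m t.
Proof.
  induction l as [|a l IH]; simpl; [ring|].
  rewrite horner_ladd, horner_map_mul; simpl; rewrite IH; ring.
Qed.

Lemma horner_app_zeros l k t : horner (l ++ repeat 0 k) t = horner l t.
Proof.
  induction l as [|a l IH]; simpl; [|rewrite IH; ring].
  induction k as [|k IHk]; simpl; [|rewrite IHk]; ring.
Qed.

Lemma horner_firstn_skipn n l t :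
  horner l t = horner (firstn n l) t + t ^ n * horner (skipn n l) t.
Proof.
  revert l; induction n as [|n IH]; intros [|a l]; simpl; try ring.
  rewrite (IH l); ring.
Qed.

Lemma horner_eq0 l t : (forall k, nth k l 0 = 0) -> horner l t = 0.
Proof.
  induction l as [|a l IH]; intros Hl; simpl; [reflexivity|].
  pose proof (Hl 0%nat) as Ha; simpl in Ha; subst a.
  rewrite IH by exact (fun k => Hl (S k)); ring.
Qed.

Lemma poly_fun_ext q r : (forall t, q t = r t) -> poly_fun r -> poly_fun q.
Proof. intros E [l Hl]; exists l; intro t; rewrite E; apply Hl. Qed.

Lemma poly_fun_const c : poly_fun (fun _ => c).
Proof. exists [c]; intro; simpl; ring. Qed.

Lemma poly_fun_affine a b : poly_fun (fun t => a + b * t).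
Proof. exists [a; b]; intro; simpl; ring. Qed.

Lemma poly_fun_add q r : poly_fun q -> poly_fun r -> poly_fun (fun t => q t + r t).
Proof.
  intros [l Hl] [m Hm]; exists (ladd l m); intro; rewrite horner_ladd, Hl, Hm; reflexivity.
Qed.

Lemma poly_fun_mul q r : poly_fun q -> poly_fun r -> poly_fun (fun t => q t * r t).
Proof.
  intros [l Hl] [m Hm]; exists (lmul l m); intro; rewrite horner_lmul, Hl, Hm; reflexivity.
Qed.

Lemma poly_fun_sub q r : poly_fun q -> poly_fun r -> poly_fun (fun t => q t - r t).
Proof.
  intros Hq Hr; apply (poly_fun_ext _ (fun t => q t + (-1) * r t)); [intro; ring|].
  apply poly_fun_add, poly_fun_mul; auto using poly_fun_const.
Qed.

Lemma poly_fun_pow q n : poly_fun q -> poly_fun (fun t => q t ^ n).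
Proof.
  intro Hq; induction n as [|n IH]; simpl; [apply poly_fun_const | apply poly_fun_mul; auto].
Qed.

Lemma horner_bound_ge1 l :
  exists K, 0 <= K /\ forall t, 1 <= t -> Rabs (horner l t) <= K * t ^ pred (length l).
Proof.
  induction l as [|c l [K [HK IH]]].
  - exists 0; split; [lra|]; intros; simpl; rewrite Rabs_R0; lra.
  - exists (Rabs c + K); split; [pose proof (Rabs_pos c); lra|].
    intros t Ht; specialize (IH t Ht).
    assert (Hp : 1 <= t ^ pred (length l)) by (apply pow_R1_Rle; lra).
    destruct l as [|d l].
    + simpl; rewrite Rmult_0_r, Rplus_0_r; pose proof (Rabs_pos c); lra.
    + change (Rabs (c + t * horner (d :: l) t)
              <= (Rabs c + K) * (t * t ^ pred (length (d :: l)))).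
      set (h := horner (d :: l) t) in *; set (P := t ^ pred (length (d :: l))) in *.
      pose proof (Rabs_triang c (t * h)) as Htri.
      rewrite Rabs_mult, (Rabs_right t) in Htri by lra.
      pose proof (Rabs_pos c).
      assert (1 <= t * P) by nra.
      assert (Rabs c <= Rabs c * (t * P)) by nra.
      assert (t * Rabs h <= t * (K * P)) by (apply Rmult_le_compat_l; lra).
      nra.
Qed.

Lemma horner_bound_le1 l : exists K, forall t, Rabs t <= 1 -> Rabs (horner l t) <= K.
Proof.
  induction l as [|c l [K IH]].
  - exists 0; intros; simpl; rewrite Rabs_R0; lra.
  - exists (Rabs c + K); intros t Ht; simpl.
    pose proof (Rabs_triang c (t * horner l t)) as Htri; rewrite Rabs_mult in Htri.
    specialize (IH t Ht); pose proof (Rabs_pos (horner l t)); pose proof (Rabs_pos t).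
    nra.
Qed.

Lemma eq0_of_abs_mul_le c K : (forall t, 1 <= t -> Rabs c * t <= K) -> c = 0.
Proof.
  intro H; destruct (Req_dec c 0) as [|Hc]; [assumption|exfalso].
  assert (Hp : 0 < Rabs c) by (apply Rabs_pos_lt; assumption).
  assert (HK : 0 <= K) by (specialize (H 1 (Rle_refl 1)); lra).
  specialize (H (K / Rabs c + 1)).
  assert (0 <= K / Rabs c)
    by (unfold Rdiv; apply Rmult_le_pos; [lra | left; apply Rinv_0_lt_compat; lra]).
  replace (Rabs c * (K / Rabs c + 1)) with (K + Rabs c) in H by (field; lra).
  lra.
Qed.

Lemma eq0_of_abs_le_mul c K : (forall t, 0 < t <= 1 -> Rabs c <= K * t) -> c = 0.
Proof.
  intro H; apply (eq0_of_abs_mul_le c K); intros s Hs.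
  assert (Hinv : 0 < / s <= 1).
  { split; [apply Rinv_0_lt_compat; lra|].
    rewrite <- Rinv_1; apply Rinv_le_contravar; lra. }
  specialize (H (/ s) Hinv).
  apply (Rmult_le_compat_r s) in H; [|lra].
  rewrite Rmult_assoc, Rinv_l in H by lra; lra.
Qed.

Lemma horner_high_coef_eq0 l : forall m C,
  (forall t, 1 <= t -> Rabs (horner l t) <= C * t ^ m) ->
  forall k, (m < k)%nat -> nth k l 0 = 0.
Proof.
  induction l as [|c l IH] using rev_ind; intros m C H k Hk; [destruct k; reflexivity|].
  assert (Hht : forall t, horner (l ++ [c]) t = horner l t + c * t ^ length l).
  { clear; intro t; induction l as [|a l IH]; simpl; [|rewrite IH]; ring. }
  destruct (le_lt_dec (length l) m) as [Hlm|Hlm].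
  { apply nth_overflow; rewrite length_app; simpl; lia. }
  assert (Hc : c = 0).
  { destruct (horner_bound_ge1 l) as (K & HK & HB).
    apply (eq0_of_abs_mul_le c (Rabs C + K)); intros t Ht.
    specialize (H t Ht); specialize (HB t Ht); rewrite Hht in H.
    set (P := t ^ pred (length l)) in *.
    assert (HP : 0 < P) by (apply pow_lt; lra).
    assert (Hm : t ^ m <= P) by (apply Rle_pow; [lra|lia]).
    assert (Hn : t ^ length l = t * P)
      by (unfold P; destruct (length l); [lia|reflexivity]).
    rewrite Hn in H.
    pose proof (Rabs_triang (horner l t + c * (t * P)) (- horner l t)) as Htri.
    replace (horner l t + c * (t * P) + - horner l t) with (c * (t * P)) in Htri by ring.
    rewrite Rabs_Ropp, !Rabs_mult, (Rabs_right t), (Rabs_right P) in Htri by lra.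
    assert (C * t ^ m <= Rabs C * P).
    { apply (Rle_trans _ (Rabs C * t ^ m)).
      - apply Rmult_le_compat_r; [apply pow_le; lra | apply Rle_abs].
      - apply Rmult_le_compat_l; [apply Rabs_pos | assumption]. }
    apply (Rmult_le_reg_r P); [assumption|]. nra. }
  subst c.
  assert (IHl : forall k, (m < k)%nat -> nth k l 0 = 0).
  { apply (IH m C); intros t Ht.
    specialize (H t Ht); rewrite Hht, Rmult_0_l, Rplus_0_r in H; exact H. }
  destruct (lt_dec k (length l)).
  - rewrite app_nth1 by assumption; auto.
  - rewrite app_nth2 by lia; destruct (k - length l)%nat as [|[|j]]; reflexivity.
Qed.

Lemma horner_low_coef_eq0 n : forall l C,
  (forall t, 0 < t <= 1 -> Rabs (horner l t) <= C * t ^ n) ->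
  forall k, (k < n)%nat -> nth k l 0 = 0.
Proof.
  induction n as [|n IH]; intros [|c l] C H k Hk; try lia; try (destruct k; reflexivity).
  assert (Hc : c = 0).
  { destruct (horner_bound_le1 l) as [K HK].
    apply (eq0_of_abs_le_mul c (Rabs C + K)); intros t Ht.
    specialize (H t Ht); specialize (HK t ltac:(rewrite Rabs_right; lra)); simpl in H.
    pose proof (Rabs_triang (c + t * horner l t) (- (t * horner l t))) as Htri.
    replace (c + t * horner l t + - (t * horner l t)) with c in Htri by ring.
    rewrite Rabs_Ropp, Rabs_mult, (Rabs_right t) in Htri by lra.
    assert (Hn : 0 <= t ^ n <= 1)
      by (split; [apply pow_le; lra | rewrite <- (pow1 n); apply pow_incr; lra]).
    assert (C * t ^ n <= Rabs C) by (pose proof (Rle_abs C); pose proof (Rabs_pos C); nra).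
    assert (C * (t * t ^ n) <= Rabs C * t) by nra.
    nra. }
  subst c; destruct k as [|k]; [reflexivity|]; simpl.
  apply (IH l C); [|lia]; intros t Ht.
  specialize (H t Ht); simpl in H.
  rewrite Rplus_0_l, Rabs_mult, (Rabs_right t) in H by lra.
  apply (Rmult_le_reg_l t); lra.
Qed.

Lemma Rabs_le_of_sq_le q K r : q ^ 2 <= K * r ^ 2 -> 0 <= r -> Rabs q <= (Rabs K + 1) * r.
Proof.
  intros H Hr; pose proof (Rle_abs K); pose proof (Rabs_pos K).
  destruct (Rle_lt_dec (Rabs q) ((Rabs K + 1) * r)) as [|Hlt]; [assumption|exfalso].
  rewrite <- pow2_abs in H.
  assert (((Rabs K + 1) * r) ^ 2 < Rabs q ^ 2) by (assert (0 <= (Rabs K + 1) * r) by nra; nra).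
  assert (K * r ^ 2 <= ((Rabs K + 1) * r) ^ 2) by (pose proof (pow2_ge_0 r); nra).
  lra.
Qed.

Lemma pow_2n t n : t ^ (2 * n) = (t ^ n) ^ 2.
Proof. rewrite Nat.mul_comm, pow_mult; reflexivity. Qed.

Lemma poly_fun_sq_le_deg q n K : poly_fun q ->
  (forall t, 1 <= t -> q t ^ 2 <= K * t ^ (2 * n)) ->
  exists l, length l = S n /\ forall t, q t = horner l t.
Proof.
  intros [l0 Hl0] H.
  set (l1 := l0 ++ repeat 0 (S n)).
  assert (Hl1 : forall t, q t = horner l1 t)
    by (intro; rewrite Hl0; symmetry; apply horner_app_zeros).
  assert (Hhigh : forall k, (n < k)%nat -> nth k l1 0 = 0).
  { apply (horner_high_coef_eq0 l1 n (Rabs K + 1)); intros t Ht; rewrite <- Hl1.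
    apply Rabs_le_of_sq_le; [rewrite <- pow_2n; auto | apply pow_le; lra]. }
  exists (firstn (S n) l1); split.
  - apply firstn_length_le; unfold l1; rewrite length_app, repeat_length; lia.
  - intro t; rewrite Hl1, (horner_firstn_skipn (S n) l1 t).
    rewrite (horner_eq0 (skipn (S n) l1)); [ring|].
    intro k; rewrite nth_skipn; apply Hhigh; lia.
Qed.

Definition lagrange3 (q : R -> R) (t : R) : R :=
  q (-1) * (t * (t - 1) / 2) + q 0 * (1 - t ^ 2) + q 1 * (t * (t + 1) / 2).

Lemma lagrange3_ext q r t : (forall s, q s = r s) -> lagrange3 q t = lagrange3 r t.
Proof. intro E; unfold lagrange3; rewrite !E; reflexivity. Qed.

Lemma poly_fun_affine_of_sq_le q K : poly_fun q ->
  (forall t, 1 <= t -> q t ^ 2 <= K * t ^ 2) -> forall t, q t = q 0 + (q 1 - q 0) * t.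
Proof.
  intros Hq H; destruct (poly_fun_sq_le_deg q 1 K Hq H) as ([|a [|b [|]]] & Hlen & E);
    try discriminate; intro t; rewrite !E; simpl; ring.
Qed.

Lemma poly_fun_lagrange3_of_sq_le q K : poly_fun q ->
  (forall t, 1 <= t -> q t ^ 2 <= K * t ^ 4) -> forall t, q t = lagrange3 q t.
Proof.
  intros Hq H; destruct (poly_fun_sq_le_deg q 2 K Hq H) as ([|a [|b [|c [|]]]] & Hlen & E);
    try discriminate; intro t; unfold lagrange3; rewrite !E; simpl; field.
Qed.

Lemma poly_fun_homogeneous_of_sq_le q n K : poly_fun q ->
  (forall t, 0 < t -> q t ^ 2 <= K * t ^ (2 * n)) -> forall t, q t = q 1 * t ^ n.
Proof.
  intros Hq H.
  destruct (poly_fun_sq_le_deg q n K Hq (fun t Ht => H t ltac:(lra))) as (l & Hlen & E).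
  assert (Hlow : forall k, (k < n)%nat -> nth k l 0 = 0).
  { apply (horner_low_coef_eq0 n l (Rabs K + 1)); intros t Ht; rewrite <- E.
    apply Rabs_le_of_sq_le; [rewrite <- pow_2n; apply H; lra | apply pow_le; lra]. }
  assert (Etop : forall t, q t = nth n l 0 * t ^ n).
  { intro t; rewrite E, (horner_firstn_skipn n l t).
    rewrite (horner_eq0 (firstn n l)).
    2: { intro k; rewrite nth_firstn; destruct (Nat.ltb_spec k n); auto. }
    assert (Hs : skipn n l = [nth n l 0]).
    { clear - Hlen; revert l Hlen; induction n as [|n IH]; intros [|a [|b l]] Hlen;
        simpl in *; try discriminate; auto; apply IH; simpl; lia. }
    rewrite Hs; simpl; ring. }
  intro t; rewrite !Etop, pow1; ring.
Qed.

Lemma poly_fun_lagrange3_of_sq_le_horner q l : poly_fun q -> (length l <= 5)%nat ->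
  (forall t, q t ^ 2 <= horner l t) -> forall t, q t = lagrange3 q t.
Proof.
  intros Hq Hl H; destruct (horner_bound_ge1 l) as (K & HK & Hb).
  apply (poly_fun_lagrange3_of_sq_le q K Hq); intros t Ht.
  eapply Rle_trans; [apply H|]; eapply Rle_trans; [apply Rle_abs|].
  eapply Rle_trans; [apply Hb, Ht|].
  apply Rmult_le_compat_l; [exact HK | apply Rle_pow; [exact Ht | lia]].
Qed.

(** * Polynomials in the variables x(T) *)

Lemma monom_local T a x y : (forall i, In i T -> x i = y i) -> monom T a x = monom T a y.
Proof.
  induction T as [|j T IH]; intro H; simpl; [reflexivity|].
  rewrite H, IH; [reflexivity | intros i Hi; apply H; right; exact Hi | left; reflexivity].
Qed.

Lemma peval_local T p x y : (forall i, In i T -> x i = y i) -> peval T p x = peval T p y.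
Proof.
  induction p as [|c p IH]; intro H; simpl; [reflexivity|].
  rewrite (monom_local T (snd c) x y H), IH by assumption; reflexivity.
Qed.

Lemma is_poly_deg_local T d g x y :
  is_poly_deg T d g -> (forall i, In i T -> x i = y i) -> g x = g y.
Proof. intros (p & _ & Hp) H; rewrite !Hp; apply peval_local, H. Qed.

Lemma monom_line T e (a b : point) : poly_fun (fun t => monom T e (fun i => a i + b i * t)).
Proof.
  induction T as [|j T IH]; simpl; [apply poly_fun_const|].
  apply poly_fun_mul; [apply poly_fun_pow, poly_fun_affine | exact IH].
Qed.

Lemma is_poly_deg_line T d g (a b : point) (c : R -> point) : is_poly_deg T d g ->
  (forall t i, In i T -> c t i = a i + b i * t) -> poly_fun (fun t => g (c t)).
Proof.
  intros (p & _ & Hp) Hc.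
  apply (poly_fun_ext _ (fun t => peval T p (fun i => a i + b i * t))).
  { intro t; rewrite Hp; apply peval_local, Hc. }
  clear Hp; induction p as [|[k e] p IH]; simpl; [apply poly_fun_const|].
  apply poly_fun_add; [apply poly_fun_mul; [apply poly_fun_const | apply monom_line] | exact IH].
Qed.

Lemma SOS_local T s x y : SOS T s -> (forall i, In i T -> x i = y i) -> s x = s y.
Proof.
  intros (t & gs & Hgs & Hs) H; rewrite !Hs.
  clear Hs; induction Hgs as [|g gs Hg _ IH]; cbn [fold_right]; [reflexivity|].
  rewrite (is_poly_deg_local T t g x y Hg H), IH; reflexivity.
Qed.

Lemma monom_exp_add T a b x :
  monom T (fun i => (a i + b i)%nat) x = monom T a x * monom T b x.
Proof. induction T as [|j T IH]; simpl; [ring|]; rewrite IH, pow_add; ring. Qed.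

Lemma mdeg_exp_add T a b : mdeg T (fun i => (a i + b i)%nat) = (mdeg T a + mdeg T b)%nat.
Proof. induction T as [|j T IH]; simpl; [reflexivity|]; rewrite IH; lia. Qed.

Lemma peval_app T p q x : peval T (p ++ q) x = peval T p x + peval T q x.
Proof. induction p as [|c p IH]; simpl; [|rewrite IH]; ring. Qed.

Definition pmul (p q : list (R * (nat -> nat))) : list (R * (nat -> nat)) :=
  flat_map (fun c => map (fun d => (fst c * fst d, fun i => (snd c i + snd d i)%nat)) q) p.

Lemma peval_pmul T p q x : peval T (pmul p q) x = peval T p x * peval T q x.
Proof.
  induction p as [|[k a] p IH]; simpl; [ring|].
  rewrite peval_app, IH; simpl.
  enough (E : peval T (map (fun d => (k * fst d, fun i => (a i + snd d i)%nat)) q) x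
              = k * monom T a x * peval T q x) by (rewrite E; ring).
  clear IH; induction q as [|[l b] q IHq]; simpl; [ring|].
  rewrite IHq, monom_exp_add; ring.
Qed.

Definition unit_exp (i : nat) : nat -> nat := fun j => if Nat.eq_dec j i then 1%nat else 0%nat.

Lemma monom_unit_exp T i x : monom T (unit_exp i) x = x i ^ count_occ Nat.eq_dec T i.
Proof.
  induction T as [|j T IH]; simpl; [reflexivity|]; rewrite IH; unfold unit_exp.
  destruct (Nat.eq_dec j i) as [->|]; simpl; ring.
Qed.

Lemma mdeg_unit_exp T i : mdeg T (unit_exp i) = count_occ Nat.eq_dec T i.
Proof.
  induction T as [|j T IH]; simpl; [reflexivity|]; rewrite IH; unfold unit_exp.
  destruct (Nat.eq_dec j i); reflexivity.
Qed.

Lemma is_poly_deg_le T d e g : is_poly_deg T d g -> (d <= e)%nat -> is_poly_deg T e g.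
Proof.
  intros (p & Hp & Hg) Hde; exists p; split; [|exact Hg].
  eapply Forall_impl; [|exact Hp]; simpl; lia.
Qed.

Lemma is_poly_deg_const T c : is_poly_deg T 0 (fun _ => c).
Proof.
  exists [(c, fun _ => 0%nat)]; split.
  - constructor; [simpl; induction T; simpl; lia | constructor].
  - intro x; simpl; enough (monom T (fun _ => 0%nat) x = 1) as -> by ring.
    induction T as [|j T IH]; simpl; [|rewrite IH]; ring.
Qed.

Lemma is_poly_deg_var T i : count_occ Nat.eq_dec T i = 1%nat -> is_poly_deg T 1 (fun x => x i).
Proof.
  intro Hi; exists [(1, unit_exp i)]; split.
  - constructor; [simpl; rewrite mdeg_unit_exp; lia | constructor].
  - intro x; simpl; rewrite monom_unit_exp, Hi; ring.
Qed.

Lemma is_poly_deg_add T d e g h : is_poly_deg T d g -> is_poly_deg T e h ->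
  is_poly_deg T (Nat.max d e) (fun x => g x + h x).
Proof.
  intros Hg Hh.
  destruct (is_poly_deg_le T d (Nat.max d e) g Hg ltac:(lia)) as (p & Hp & Ep).
  destruct (is_poly_deg_le T e (Nat.max d e) h Hh ltac:(lia)) as (q & Hq & Eq).
  exists (p ++ q); split; [apply Forall_app; auto|].
  intro x; rewrite peval_app, Ep, Eq; reflexivity.
Qed.

Lemma is_poly_deg_mul T d e g h : is_poly_deg T d g -> is_poly_deg T e h ->
  is_poly_deg T (d + e) (fun x => g x * h x).
Proof.
  intros (p & Hp & Ep) (q & Hq & Eq); exists (pmul p q); split.
  - rewrite Forall_forall in *; intros c Hc.
    unfold pmul in Hc; apply in_flat_map in Hc as (a & Ha & Hc).
    apply in_map_iff in Hc as (b & <- & Hb); simpl.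
    rewrite mdeg_exp_add; specialize (Hp a Ha); specialize (Hq b Hb); lia.
  - intro x; rewrite peval_pmul, Ep, Eq; reflexivity.
Qed.

Lemma is_poly_deg_ext T d g h : (forall x, g x = h x) -> is_poly_deg T d h -> is_poly_deg T d g.
Proof. intros E (p & Hp & Eh); exists p; split; [exact Hp|]; intro x; rewrite E; apply Eh. Qed.

Lemma is_poly_deg_sub T d e g h : is_poly_deg T d g -> is_poly_deg T e h ->
  is_poly_deg T (Nat.max d e) (fun x => g x - h x).
Proof.
  intros Hg Hh; apply (is_poly_deg_ext _ _ _ (fun x => g x + (-1) * h x)); [intro; ring|].
  apply (is_poly_deg_add T d (0 + e)); [assumption|].
  apply is_poly_deg_mul; [apply is_poly_deg_const | assumption].
Qed.

Lemma is_poly_deg_pow T d g k : is_poly_deg T d g -> is_poly_deg T (k * d) (fun x => g x ^ k).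
Proof.
  intro Hg; induction k as [|k IH].
  - apply (is_poly_deg_ext _ _ _ (fun _ => 1)); [reflexivity | apply is_poly_deg_const].
  - apply (is_poly_deg_mul T d (k * d) g); assumption.
Qed.

Ltac poly_deg_exact :=
  cbv beta;
  lazymatch goal with
  | |- is_poly_deg _ _ (fun x => @?g x ^ ?k) =>
      eapply (is_poly_deg_pow _ _ g k); poly_deg_exact
  | |- is_poly_deg _ _ (fun x => @?g x * @?h x) =>
      eapply (is_poly_deg_mul _ _ _ g h); poly_deg_exact
  | |- is_poly_deg _ _ (fun x => @?g x - @?h x) =>
      eapply (is_poly_deg_sub _ _ _ g h); poly_deg_exact
  | |- is_poly_deg _ _ (fun x => @?g x + @?h x) =>
      eapply (is_poly_deg_add _ _ _ g h); poly_deg_exact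
  | |- is_poly_deg _ _ (fun x => x _) => apply is_poly_deg_var; first [assumption | reflexivity]
  | |- is_poly_deg _ _ (fun _ => _) => apply is_poly_deg_const
  end.

Ltac poly_deg :=
  eapply is_poly_deg_le; [poly_deg_exact | apply Nat.leb_le; reflexivity].

(** * Sums of squares *)

Definition sumsq {A} (F : A -> R) (l : list A) : R := fold_right (fun a acc => F a ^ 2 + acc) 0 l.

Lemma sumsq_nonneg {A} (F : A -> R) l : 0 <= sumsq F l.
Proof.
  induction l as [|a l IH]; cbn [sumsq fold_right]; [lra|].
  pose proof (pow2_ge_0 (F a)); fold (sumsq F l); lra.
Qed.

Lemma sumsq_in {A} (F : A -> R) l a : In a l -> F a ^ 2 <= sumsq F l.
Proof.
  induction l as [|b l IH]; cbn [sumsq fold_right In]; [tauto|]; fold (sumsq F l).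
  pose proof (sumsq_nonneg F l); pose proof (pow2_ge_0 (F b)).
  intros [->|Ha]; [lra|]; specialize (IH Ha); lra.
Qed.

Lemma sumsq_ext {A} (F G : A -> R) l :
  (forall a, In a l -> F a = G a) -> sumsq F l = sumsq G l.
Proof.
  induction l as [|b l IH]; intro H; cbn [sumsq fold_right]; [reflexivity|].
  rewrite H by (left; reflexivity); f_equal; apply IH; intros a Ha; apply H; right; exact Ha.
Qed.

Lemma sumsq_eq0 {A} (F : A -> R) l : (forall a, In a l -> F a = 0) -> sumsq F l = 0.
Proof.
  intro H; rewrite (sumsq_ext F (fun _ => 0)) by exact H; clear H.
  unfold sumsq; induction l as [|a l IH]; cbn [fold_right]; [|rewrite IH]; ring.
Qed.

Lemma sumsq_app {A} (F : A -> R) l m : sumsq F (l ++ m) = sumsq F l + sumsq F m.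
Proof. unfold sumsq; induction l as [|a l IH]; cbn [fold_right app]; [|rewrite IH]; ring. Qed.

Lemma sumsq_map {A B} (f : A -> B) (F : B -> R) l : sumsq F (map f l) = sumsq (fun a => F (f a)) l.
Proof.
  unfold sumsq; induction l as [|a l IH]; cbn [fold_right map]; [|rewrite IH]; reflexivity.
Qed.

Lemma sumsq_scale {A} c (F : A -> R) l : sumsq (fun a => c * F a) l = c ^ 2 * sumsq F l.
Proof. unfold sumsq; induction l as [|a l IH]; cbn [fold_right]; [|rewrite IH]; ring. Qed.

Lemma sumsq_leading_coef {A} (F G : A -> R) l S E :
  (forall w, sumsq (fun a => F a + G a * w) l = w ^ 2 * S + E) -> sumsq G l = S.
Proof.
  intro H.
  assert (D : sumsq (fun a => F a + G a * 1) l + sumsq (fun a => F a + G a * -1) l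
              - 2 * sumsq (fun a => F a + G a * 0) l = 2 * sumsq G l).
  { clear H; unfold sumsq; induction l as [|a l IH]; cbn [fold_right]; [ring|]; nra. }
  rewrite (H 1), (H (-1)), (H 0) in D; lra.
Qed.

Lemma SOS_deg_ext T t s s' : (forall x, s x = s' x) -> SOS_deg T t s' -> SOS_deg T t s.
Proof. intros E (gs & Hgs & Hs); exists gs; split; [exact Hgs|]; intro x; rewrite E; apply Hs. Qed.

Lemma SOS_deg_sq T t g : is_poly_deg T t g -> SOS_deg T t (fun x => g x ^ 2).
Proof. intro Hg; exists [g]; split; [repeat constructor; exact Hg|]; intro; simpl; ring. Qed.

Lemma SOS_deg_add T t s1 s2 :
  SOS_deg T t s1 -> SOS_deg T t s2 -> SOS_deg T t (fun x => s1 x + s2 x).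
Proof.
  intros (gs & Hgs & Hs1) (hs & Hhs & Hs2); exists (gs ++ hs); split; [apply Forall_app; auto|].
  intro x; rewrite Hs1, Hs2; apply eq_sym, (sumsq_app (fun g => g x)).
Qed.

Lemma SOS_deg_mul T t1 t2 s1 s2 : SOS_deg T t1 s1 -> SOS_deg T t2 s2 ->
  SOS_deg T (t1 + t2) (fun x => s1 x * s2 x).
Proof.
  intros (gs & Hgs & Hs1) (hs & Hhs & Hs2).
  exists (flat_map (fun g => map (fun h x => g x * h x) hs) gs); split.
  - rewrite Forall_forall in *; intros f Hf.
    apply in_flat_map in Hf as (g & Hg & Hf); apply in_map_iff in Hf as (h & <- & Hh).
    apply is_poly_deg_mul; auto.
  - intro x; rewrite Hs1, Hs2; clear Hgs Hhs Hs1 Hs2.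
    change (sumsq (fun g => g x) gs * sumsq (fun h => h x) hs
      = sumsq (fun f => f x) (flat_map (fun g => map (fun h x => g x * h x) hs) gs)).
    induction gs as [|g gs IH]; cbn [flat_map]; [unfold sumsq; simpl; ring|].
    rewrite sumsq_app, sumsq_map; cbv beta; rewrite sumsq_scale, <- IH.
    unfold sumsq; cbn [fold_right]; ring.
Qed.

Lemma SOS_deg_sumsq_vars T l :
  Forall (fun i => count_occ Nat.eq_dec T i = 1%nat) l -> SOS_deg T 1 (fun x => sumsq x l).
Proof.
  intro Hl; exists (map (fun i x => x i) l); split.
  - rewrite Forall_map; eapply Forall_impl; [|exact Hl]; intros i Hi; apply is_poly_deg_var, Hi.
  - intro x; change (sumsq x l = sumsq (fun g => g x) (map (fun i x => x i) l)).
    rewrite sumsq_map; reflexivity.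
Qed.

(** * The Choi-Lam form *)

Definition choi_lam (x y z : R) : R := x^4*y^2 + y^4*z^2 + z^4*x^2 - 3*x^2*y^2*z^2.

(* The weight 1/2 of the last three squares is split into two equal squares. *)
Definition choi_lam_roots : list (R -> R -> R -> R) :=
  [fun x y z => x^3*y - x*y*z^2; fun x y z => y^3*z - x^2*y*z; fun x y z => z^3*x - x*y^2*z;
   fun x y z => 1/2 * (x^2*y^2 - y^2*z^2); fun x y z => 1/2 * (x^2*y^2 - y^2*z^2);
   fun x y z => 1/2 * (y^2*z^2 - z^2*x^2); fun x y z => 1/2 * (y^2*z^2 - z^2*x^2);
   fun x y z => 1/2 * (z^2*x^2 - x^2*y^2); fun x y z => 1/2 * (z^2*x^2 - x^2*y^2)].

Lemma choi_lam_mul_sumsq x y z :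
  (x^2 + y^2 + z^2) * choi_lam x y z = sumsq (fun r => r x y z) choi_lam_roots.
Proof. unfold choi_lam, sumsq; simpl; field. Qed.

Lemma choi_lam_nonneg x y z : 0 <= choi_lam x y z.
Proof.
  pose proof (choi_lam_mul_sumsq x y z) as E.
  pose proof (sumsq_nonneg (fun r => r x y z) choi_lam_roots).
  destruct (Req_dec (x^2 + y^2 + z^2) 0) as [Q0|Q].
  - assert (x = 0 /\ y = 0 /\ z = 0) as (-> & -> & ->) by (repeat split; nra).
    unfold choi_lam; lra.
  - pose proof (pow2_ge_0 x); pose proof (pow2_ge_0 y); pose proof (pow2_ge_0 z).
    apply (Rmult_le_reg_l (x^2 + y^2 + z^2)); lra.
Qed.

Lemma choi_lam_mul_SOS_deg T : count_occ Nat.eq_dec T 1%nat = 1%nat ->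
  count_occ Nat.eq_dec T 2%nat = 1%nat -> count_occ Nat.eq_dec T 3%nat = 1%nat ->
  SOS_deg T 4 (fun x => sumsq x [1; 2; 3]%nat * choi_lam (x 1%nat) (x 2%nat) (x 3%nat)).
Proof.
  intros H1 H2 H3; exists (map (fun r x => r (x 1%nat) (x 2%nat) (x 3%nat)) choi_lam_roots); split.
  - cbn [map choi_lam_roots]; repeat (apply Forall_cons; [poly_deg|]); apply Forall_nil.
  - intro x; change (sumsq x [1; 2; 3]%nat * choi_lam (x 1%nat) (x 2%nat) (x 3%nat)
      = sumsq (fun g => g x) (map (fun r x => r (x 1%nat) (x 2%nat) (x 3%nat)) choi_lam_roots)).
    rewrite sumsq_map, <- choi_lam_mul_sumsq; unfold sumsq; cbn [fold_right]; ring.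
Qed.

(* Polynomials in three variables are only used through their restrictions to lines. *)
Definition poly_on_lines (B : R -> R -> R -> R) : Prop :=
  forall x0 y0 z0 u v w, poly_fun (fun t => B (x0 + u * t) (y0 + v * t) (z0 + w * t)).

Definition cubic_form (p q r s u v x y z : R) : R :=
  x*y*(1 - z^2)*(p*x + q*y) + y*z*(1 - x^2)*(r*y + s*z) + z*x*(1 - y^2)*(u*z + v*x).

Lemma coef1_eq0_of_sq_le_pow4 c d :
  (forall t, 0 < t <= 1 -> (c * t + d * t ^ 2) ^ 2 <= t ^ 4) -> c = 0.
Proof.
  intro H; change c with (nth 1 [0; c; d] 0).
  apply (horner_low_coef_eq0 2 [0; c; d] 2); [|lia].
  intros t Ht; replace 2 with (Rabs 1 + 1) by (rewrite Rabs_R1; ring).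
  apply Rabs_le_of_sq_le; [|apply pow_le; lra].
  replace (horner [0; c; d] t) with (c * t + d * t ^ 2) by (simpl; ring).
  replace (1 * (t ^ 2) ^ 2) with (t ^ 4) by ring; auto.
Qed.

Section SquareBelowChoiLam.

Variable B : R -> R -> R -> R.
Hypothesis B_lines : poly_on_lines B.
Hypothesis B_sq_le : forall x y z, B x y z ^ 2 <= choi_lam x y z.

Lemma B_homogeneous x y z l : B (l * x) (l * y) (l * z) = l ^ 3 * B x y z.
Proof.
  set (q t := B (0 + x * t) (0 + y * t) (0 + z * t)).
  assert (Eq : forall t, q t = B (t * x) (t * y) (t * z)) by (intro; unfold q; f_equal; ring).
  assert (Hq : forall t, q t = q 1 * t ^ 3).
  { apply (poly_fun_homogeneous_of_sq_le q 3 (choi_lam x y z) (B_lines 0 0 0 x y z)).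
    intros t Ht; rewrite Eq; eapply Rle_trans; [apply B_sq_le|].
    unfold choi_lam; right; change (2 * 3)%nat with 6%nat; ring. }
  rewrite <- Eq, Hq, Eq, !Rmult_1_l; ring.
Qed.

Lemma B_vanish x y z : choi_lam x y z = 0 -> B x y z = 0.
Proof. intro H; pose proof (B_sq_le x y z) as Hle; rewrite H in Hle; nra. Qed.

Lemma B_lagrange_x x y z : B x y z = lagrange3 (fun s => B s y z) x.
Proof.
  apply (poly_fun_lagrange3_of_sq_le_horner (fun s => B s y z)
           [y^4*z^2; 0; z^4 - 3*y^2*z^2; 0; y^2]);
    [| simpl; lia |].
  - refine (poly_fun_ext _ _ _ (B_lines 0 y z 1 0 0)); intro t; f_equal; ring.
  - intro t; eapply Rle_trans; [apply B_sq_le|].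
    right; unfold choi_lam; simpl; ring.
Qed.

Lemma B_lagrange_y x y z : B x y z = lagrange3 (fun s => B x s z) y.
Proof.
  apply (poly_fun_lagrange3_of_sq_le_horner (fun s => B x s z)
           [z^4*x^2; 0; x^4 - 3*x^2*z^2; 0; z^2]);
    [| simpl; lia |].
  - refine (poly_fun_ext _ _ _ (B_lines x 0 z 0 1 0)); intro t; f_equal; ring.
  - intro t; eapply Rle_trans; [apply B_sq_le|].
    right; unfold choi_lam; simpl; ring.
Qed.

Lemma B_lagrange_z x y z : B x y z = lagrange3 (fun s => B x y s) z.
Proof.
  apply (poly_fun_lagrange3_of_sq_le_horner (fun s => B x y s)
           [x^4*y^2; 0; y^4 - 3*x^2*y^2; 0; x^2]);
    [| simpl; lia |].
  - refine (poly_fun_ext _ _ _ (B_lines x y 0 0 0 1)); intro t; f_equal; ring.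
  - intro t; eapply Rle_trans; [apply B_sq_le|].
    right; unfold choi_lam; simpl; ring.
Qed.

Lemma B_lagrange_grid x y z :
  B x y z = lagrange3 (fun i => lagrange3 (fun j => lagrange3 (fun k => B i j k) z) y) x.
Proof.
  rewrite B_lagrange_x at 1; apply lagrange3_ext; intro i.
  rewrite B_lagrange_y at 1; apply lagrange3_ext; intro j.
  apply B_lagrange_z.
Qed.

Lemma B_odd_at x y z x' y' z' : x' = - x -> y' = - y -> z' = - z -> B x' y' z' = - B x y z.
Proof.
  intros -> -> ->; replace (- x) with (-1 * x) by ring; replace (- y) with (-1 * y) by ring;
    replace (- z) with (-1 * z) by ring.
  rewrite B_homogeneous; ring.
Qed.

(* B is its Lagrange interpolant on {-1,0,1}^3; the zeros of S and oddness leave the values at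
   (1,1,0), (1,-1,0), (0,1,1), (0,1,-1), (1,0,1), (-1,0,1). *)
Lemma B_cubic_form : exists p q r s u v, forall x y z, B x y z = cubic_form p q r s u v x y z.
Proof.
  exists ((B 1 1 0 - B 1 (-1) 0) / 2), ((B 1 1 0 + B 1 (-1) 0) / 2),
    ((B 0 1 1 - B 0 1 (-1)) / 2), ((B 0 1 1 + B 0 1 (-1)) / 2),
    ((B 1 0 1 - B (-1) 0 1) / 2), ((B 1 0 1 + B (-1) 0 1) / 2).
  intros x y z; rewrite (B_lagrange_grid x y z); unfold lagrange3, cubic_form.
  rewrite (B_vanish 0 0 0), (B_vanish 1 0 0), (B_vanish (-1) 0 0), (B_vanish 0 1 0),
    (B_vanish 0 (-1) 0), (B_vanish 0 0 1), (B_vanish 0 0 (-1)), (B_vanish 1 1 1),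
    (B_vanish 1 1 (-1)), (B_vanish 1 (-1) 1), (B_vanish 1 (-1) (-1)), (B_vanish (-1) 1 1),
    (B_vanish (-1) 1 (-1)), (B_vanish (-1) (-1) 1), (B_vanish (-1) (-1) (-1))
    by (unfold choi_lam; ring).
  rewrite (B_odd_at 1 1 0 (-1) (-1) 0), (B_odd_at 1 (-1) 0 (-1) 1 0),
    (B_odd_at 0 1 1 0 (-1) (-1)), (B_odd_at 0 1 (-1) 0 (-1) 1),
    (B_odd_at 1 0 1 (-1) 0 (-1)), (B_odd_at (-1) 0 1 1 0 (-1)) by lra.
  field.
Qed.

Lemma B_eq0 x y z : B x y z = 0.
Proof.
  destruct B_cubic_form as (p & q & r & s & u & v & HB).
  (* homogeneity kills the quintic part of cubic_form *)
  assert (Hhom : p + s = 0 /\ q + u = 0 /\ r + v = 0).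
  { pose proof (B_homogeneous 1 1 1 2) as H1; pose proof (B_homogeneous 1 1 2 2) as H2;
      pose proof (B_homogeneous 2 1 1 2) as H3.
    rewrite !HB in H1, H2, H3; unfold cubic_form in *; lra. }
  (* S restricts to t^4 on the lines (t,1,0), (0,t,1), (1,0,t) *)
  assert (Hq : q = 0).
  { apply (coef1_eq0_of_sq_le_pow4 q p); intros t Ht.
    replace (q * t + p * t ^ 2) with (B t 1 0) by (rewrite HB; unfold cubic_form; ring).
    eapply Rle_trans; [apply B_sq_le | right; unfold choi_lam; ring]. }
  assert (Hs : s = 0).
  { apply (coef1_eq0_of_sq_le_pow4 s r); intros t Ht.
    replace (s * t + r * t ^ 2) with (B 0 t 1) by (rewrite HB; unfold cubic_form; ring).
    eapply Rle_trans; [apply B_sq_le | right; unfold choi_lam; ring]. }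
  assert (Hv : v = 0).
  { apply (coef1_eq0_of_sq_le_pow4 v u); intros t Ht.
    replace (v * t + u * t ^ 2) with (B 1 0 t) by (rewrite HB; unfold cubic_form; ring).
    eapply Rle_trans; [apply B_sq_le | right; unfold choi_lam; ring]. }
  assert (p = 0 /\ r = 0 /\ u = 0) as (-> & -> & ->) by lra; subst q s v.
  rewrite HB; unfold cubic_form; ring.
Qed.

End SquareBelowChoiLam.

Lemma choi_lam_not_sumsq {A} (l : list A) (B : A -> R -> R -> R -> R) :
  (forall a, In a l -> poly_on_lines (B a)) ->
  ~ (forall x y z, sumsq (fun a => B a x y z) l = choi_lam x y z).
Proof.
  intros Hl Hsum.
  assert (Hz : forall a, In a l -> B a 1 1 0 = 0).
  { intros a Ha; apply (B_eq0 (B a) (Hl a Ha)); intros x y z.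
    rewrite <- Hsum; apply (sumsq_in (fun a => B a x y z) l a Ha). }
  specialize (Hsum 1 1 0); rewrite sumsq_eq0 in Hsum by exact Hz.
  unfold choi_lam in Hsum; lra.
Qed.

(** * The form f *)

Definition pt4 (x y z w : R) : point :=
  fun i => match i with 1%nat => x | 2%nat => y | 3%nat => z | 4%nat => w | _ => 0 end.

Lemma fpoly_pt4 x y z w : fpoly (pt4 x y z w) = w ^ 2 * choi_lam x y z + z ^ 8.
Proof. unfold fpoly, f1, f2, choi_lam; simpl; ring. Qed.

Lemma fpoly_not_sum_sos :
  ~ exists s1 s2 : point -> R, SOS I1 s1 /\ SOS I2 s2 /\ forall x, fpoly x = s1 x + s2 x.
Proof.
  intros (s1 & s2 & (t & gs & Hgs & Hs1) & Hs2 & Hf); rewrite Forall_forall in Hgs.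
  set (E x y z := z ^ 8 - s2 (pt4 x y z 0)).
  assert (Hsum : forall x y z w,
    sumsq (fun g => g (pt4 x y z w)) gs = w ^ 2 * choi_lam x y z + E x y z).
  { intros x y z w; unfold sumsq; rewrite <- Hs1; unfold E.
    rewrite <- (SOS_local I2 s2 (pt4 x y z w) (pt4 x y z 0) Hs2)
      by (intros i Hi; simpl in Hi; intuition (subst; reflexivity)).
    pose proof (Hf (pt4 x y z w)) as Hfw; rewrite fpoly_pt4 in Hfw; lra. }
  assert (Haff : forall g, In g gs -> forall x y z w,
    g (pt4 x y z w) = g (pt4 x y z 0) + (g (pt4 x y z 1) - g (pt4 x y z 0)) * w).
  { intros g Hg x y z.
    apply (poly_fun_affine_of_sq_le (fun w => g (pt4 x y z w))
             (Rabs (choi_lam x y z) + Rabs (E x y z))).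
    - apply (is_poly_deg_line I1 t g (pt4 x y z 0) (pt4 0 0 0 1)); [auto|].
      intros w i Hi; simpl in Hi; intuition (subst; simpl; ring).
    - intros w Hw; eapply Rle_trans; [apply (sumsq_in (fun g => g (pt4 x y z w)) gs g Hg)|].
      rewrite Hsum; pose proof (Rle_abs (choi_lam x y z)); pose proof (Rle_abs (E x y z)).
      pose proof (Rabs_pos (E x y z)); assert (1 <= w ^ 2) by nra; nra. }
  apply (choi_lam_not_sumsq gs (fun g x y z => g (pt4 x y z 1) - g (pt4 x y z 0))).
  - intros g Hg x0 y0 z0 u v w; apply poly_fun_sub.
    + apply (is_poly_deg_line I1 t g (pt4 x0 y0 z0 1) (pt4 u v w 0)); [auto|].
      intros s i Hi; simpl in Hi; intuition (subst; simpl; ring).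
    + apply (is_poly_deg_line I1 t g (pt4 x0 y0 z0 0) (pt4 u v w 0)); [auto|].
      intros s i Hi; simpl in Hi; intuition (subst; simpl; ring).
  - intros x y z; apply (sumsq_leading_coef (fun g => g (pt4 x y z 0)) _ gs _ (E x y z)).
    intro w; rewrite <- Hsum; apply sumsq_ext; intros g Hg; symmetry; apply Haff, Hg.
Qed.

Lemma f1_H1_SOS_deg : SOS_deg I1 6 (fun x => f1 x * H1 x).
Proof.
  apply (SOS_deg_ext I1 6 _ (fun x =>
    x 4%nat ^ 2 * (sumsq x [1; 2; 3]%nat * choi_lam (x 1%nat) (x 2%nat) (x 3%nat))
      * sumsq x [1; 2; 3; 4]%nat
    + (x 3%nat ^ 4) ^ 2 * sumsq x [1; 2; 3]%nat * sumsq x [1; 2; 3; 4]%nat)).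
  { intro x; unfold f1, H1, sumsq, choi_lam; cbn [fold_right]; ring. }
  apply SOS_deg_add; apply (SOS_deg_mul _ 5 1); try (apply SOS_deg_sumsq_vars; repeat constructor).
  - apply (SOS_deg_mul _ 1 4); [apply SOS_deg_sq; poly_deg|].
    apply choi_lam_mul_SOS_deg; reflexivity.
  - apply (SOS_deg_mul _ 4 1); [apply SOS_deg_sq; poly_deg|].
    apply SOS_deg_sumsq_vars; repeat constructor.
Qed.

Lemma f2_H2_SOS_deg : SOS_deg I2 6 (fun x => f2 x * H2 x).
Proof.
  apply (SOS_deg_ext I2 6 _ (fun x => (x 1%nat * x 2%nat * x 3%nat * x 5%nat) ^ 2
    * sumsq x [1; 2; 3]%nat * sumsq x [1; 2; 3; 5]%nat)).
  { intro x; unfold f2, H2, sumsq; cbn [fold_right]; ring. }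
  apply (SOS_deg_mul _ 5 1); [apply (SOS_deg_mul _ 4 1); [apply SOS_deg_sq; poly_deg|] |];
    apply SOS_deg_sumsq_vars; repeat constructor.
Qed.

Lemma fpoly_nonneg x : 0 <= fpoly x.
Proof.
  pose proof (choi_lam_nonneg (x 1%nat) (x 2%nat) (x 3%nat)) as HS.
  assert (E : fpoly x = x 4%nat ^ 2 * choi_lam (x 1%nat) (x 2%nat) (x 3%nat) + (x 3%nat ^ 4) ^ 2
                        + (x 1%nat * x 2%nat * x 3%nat * x 5%nat) ^ 2)
    by (unfold fpoly, f1, f2, choi_lam; ring).
  rewrite E; apply Rplus_le_le_0_compat; [apply Rplus_le_le_0_compat|]; try apply pow2_ge_0.
  apply Rmult_le_pos; [apply pow2_ge_0 | exact HS].
Qed.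

Lemma fpoly_not_pos_def : ~ pos_def fpoly.
Proof.
  intro Hpd.
  assert (Hnz : nonzero5 (pt4 1 0 0 0)) by (exists 1%nat; split; [lia | exact R1_neq_R0]).
  specialize (Hpd (pt4 1 0 0 0) Hnz).
  replace (fpoly (pt4 1 0 0 0)) with 0 in Hpd by (rewrite fpoly_pt4; unfold choi_lam; ring).
  lra.
Qed.

Lemma fpoly_eq_SOS_div_H : exists s1 s2 : point -> R,
  SOS_deg I1 6 s1 /\ SOS_deg I2 6 s2 /\
  forall x, H1 x <> 0 -> H2 x <> 0 -> fpoly x = s1 x / H1 x + s2 x / H2 x.
Proof.
  exists (fun x => f1 x * H1 x), (fun x => f2 x * H2 x).
  split; [exact f1_H1_SOS_deg | split; [exact f2_H2_SOS_deg |]].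
  intros x H1x H2x; unfold fpoly; field; split; assumption.
Qed.

Theorem mainTheorem8 :
  ((is_poly_deg [1; 2; 3; 4; 5]%nat 8 fpoly /\
    (forall (l : R) (x : point), fpoly (fun i => l * x i) = l ^ 8 * fpoly x) /\
    (exists x : point, fpoly x <> 0)) /\
   (forall x : point, 0 <= fpoly x) /\
   ~ pos_def fpoly) /\
  (~ exists s1 s2 : point -> R,
       SOS I1 s1 /\ SOS I2 s2 /\ forall x, fpoly x = s1 x + s2 x) /\
  (exists s1 s2 : point -> R,
     SOS_deg I1 6 s1 /\ SOS_deg I2 6 s2 /\
     forall x, H1 x <> 0 -> H2 x <> 0 -> fpoly x = s1 x / H1 x + s2 x / H2 x).
Proof.
  split; [split; [split; [|split] | split] | split].
  - unfold fpoly, f1, f2; poly_deg.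
  - intros l x; unfold fpoly, f1, f2; ring.
  - exists (fun _ => 1); unfold fpoly, f1, f2; lra.
  - exact fpoly_nonneg.
  - exact fpoly_not_pos_def.
  - exact fpoly_not_sum_sos.
  - exact fpoly_eq_SOS_div_H.
Qed.
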